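(* Let $p\ge5$, $n\ge0$, and let $\mu<\nu$ be two integers in $\{M_{n-1}+1,\dots,M_n\}$ whose nzm-codes both end with the digit $1$, such that no integer strictly between $\mu$ and $\nu$ has an nzm-code ending with $1$. Then $\nu-\mu=p-3$ if and only if the nzm-code of $\nu$ ends with $11$; otherwise $\nu-\mu=p-2$.
   Context: Fix $p\ge5$. Metallic numbers: $m_{-1}=0$, $m_0=1$, $m_{n+2}=(p-2)m_{n+1}-m_n$; $M_n=\sum_{k=0}^n m_k$, $M_{-1}=0$. Write $x=p-2$, $d=p-3$. The nzm-code of a positive integer $n$ is the unique word $a_k\cdots a_0$ over the digits $\{1,\dots,p-2\}$ with $n=\sum a_i m_i$ containing no factor $x\,d^j\,x$ ($j\ge0$). *)

From mathcomp Require Import all_boot.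
Set Implicit Arguments. Unset Strict Implicit. Unset Printing Implicit Defensive.

(* Metallic numbers m_k (k >= 0): m_0 = 1, m_1 = (p-2) m_0 - m_{-1} = p-2,
   m_{k+2} = (p-2) m_{k+1} - m_k.  (For p >= 4 the sequence is increasing,
   so truncated subtraction is exact.) *)
Fixpoint metal_aux (p k : nat) : nat * nat :=
  match k with
  | 0 => (1, p - 2)
  | k'.+1 => let: (a, b) := metal_aux p k' in (b, (p - 2) * b - a)
  end.
Definition metal (p k : nat) : nat := (metal_aux p k).1.

(* M_n = sum_{k=0}^n m_k ; M_{n-1} is written Mprev p n (with M_{-1} = 0). *)
Definition Msum (p n : nat) : nat := \sum_(k < n.+1) metal p k.
Definition Mprev (p n : nat) : nat := \sum_(k < n) metal p k.

(* Words are lists of digits, least significant first: w = [a_0; a_1; ...; a_k]. *)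
Definition word_value (p : nat) (w : seq nat) : nat :=
  \sum_(i < size w) nth 0 w i * metal p i.

(* w contains no factor x d^j x (j >= 0), x = p-2, d = p-3. *)
Definition no_forbidden (p : nat) (w : seq nat) : Prop :=
  forall i j, i + j.+1 < size w ->
    nth 0 w i = p - 2 ->
    (forall k, 0 < k <= j -> nth 0 w (i + k) = p - 3) ->
    nth 0 w (i + j.+1) <> p - 2.

Definition is_nzm_code (p : nat) (w : seq nat) (N : nat) : Prop :=
  all (fun a => (1 <= a) && (a <= p - 2)) w /\
  N = word_value p w /\ no_forbidden p w.

Definition ends1 (p N : nat) : Prop :=
  exists w, is_nzm_code p w N /\ nth 0 w 0 = 1.

Definition ends11 (p N : nat) : Prop :=
  exists w, is_nzm_code p w N /\ nth 0 w 0 = 1 /\ nth 0 w 1 = 1.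

From mathcomp Require Import all_boot zify.
Set Implicit Arguments. Unset Strict Implicit. Unset Printing Implicit Defensive.

(* Words are written least significant digit first.  Since [d^k x] is the
   largest admissible word of length [k+1] and its value is one less than
   that of [1^(k+2)], an nzm-code of length [L] has value in [[M_(L-1), M_L)],
   and comparing top digits shows that nzm-codes are unique.  If the code of
   [nu] ends with 1, the code of [nu - 1] is obtained by a carry: [1 b r]
   (with [b <> 1]) becomes [x (b-1) r], [1^(k+2) b r] becomes
   [d^(k+1) x (b-1) r] and [1^(k+3)] becomes [d^(k+1) x].  So [nu - 1] has a
   code [e v] with [e = x], or [e = d] exactly when the code of [nu] ends
   with 11; then [nu - e, ..., nu - 1] are the numbers with codes [c v],
   [1 <= c <= e], and the last one ending with 1 before [nu] is [nu - e].
   The only exception, [nu = p - 1] with code [11] and [mu = 1], is excluded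
   because [1] is alone in its block. *)

Section Nzm.

Variable p : nat.
Hypothesis p_ge4 : 4 <= p.

Lemma metalSS k : metal p k.+2 = (p - 2) * metal p k.+1 - metal p k.
Proof. by rewrite /metal /=; case: (metal_aux p k). Qed.

Lemma metal_le k : metal p k <= metal p k.+1.
Proof.
elim: k => [|k IHk]; first by rewrite /metal /=; lia.
have : 2 * metal p k.+1 <= (p - 2) * metal p k.+1 by rewrite leq_mul2r; lia.
rewrite metalSS; lia.
Qed.

Lemma metal_gt0 k : 0 < metal p k.
Proof. by elim: k => // k /leq_trans; apply; apply: metal_le. Qed.

Lemma metal_rec k : metal p k.+2 + metal p k = (p - 2) * metal p k.+1.
Proof.
have : metal p k.+1 <= (p - 2) * metal p k.+1 by rewrite leq_pmull; lia.
by rewrite metalSS; have := metal_le k; lia.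
Qed.

Lemma MprevS n : Mprev p n.+1 = Mprev p n + metal p n.
Proof. by rewrite /Mprev big_ord_recr. Qed.

Lemma Mprev_mono : {homo Mprev p : m n / m <= n}.
Proof.
by apply: homo_leq => [//|n m k|n]; [apply: leq_trans | rewrite MprevS leq_addr].
Qed.

Lemma Msum_eq1 n : Mprev p n = 0 -> Msum p n = 1.
Proof.
case: n => [|n]; first by rewrite /Msum big_ord1.
by rewrite MprevS; have := metal_gt0 n; lia.
Qed.

Lemma Mprev_bracket_inj L1 L2 N :
  Mprev p L1 <= N < Mprev p L1.+1 -> Mprev p L2 <= N < Mprev p L2.+1 -> L1 = L2.
Proof.
move=> /andP[le1 lt1] /andP[le2 lt2].
by case: (ltngtP L1 L2) => // /Mprev_mono; lia.
Qed.

(* [Mprev p k.+2] is the value of [1^(k+2)], and the right-hand side minus 1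
   that of [d^k x]. *)
Lemma Mprev_carry k : Mprev p k.+2 = (p - 2) * metal p k + (p - 3) * Mprev p k + 1.
Proof.
elim: k => [|k IHk]; first by rewrite /Mprev !big_ord_recr big_ord0 /metal /=; lia.
have := metal_rec k; rewrite MprevS IHk !MprevS mulnDr.
have -> : (p - 2) * metal p k = metal p k + (p - 3) * metal p k.
  by rewrite -mulSn; congr (_ * _); lia.
lia.
Qed.

Fixpoint value_from k (w : seq nat) : nat :=
  if w is a :: w' then a * metal p k + value_from k.+1 w' else 0.

Local Notation value := (value_from 0).

Lemma word_valueE w : word_value p w = value w.
Proof.
suff shifted k : \sum_(i < size w) nth 0 w i * metal p (k + i) = value_from k w.
  exact: shifted 0.
elim: w k => [|a w IHw] k; first by rewrite big_ord0.
rewrite big_ord_recl /= addn0 -IHw; congr (_ + _).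
by apply: eq_bigr => i _; rewrite addSnnS.
Qed.

Lemma value_from_cat k s t :
  value_from k (s ++ t) = value_from k s + value_from (k + size s) t.
Proof.
elim: s k => [|a s IHs] k /=; first by rewrite addn0.
by rewrite IHs addSnnS addnA.
Qed.

Lemma value_cons a w : value (a :: w) = a + value_from 1 w.
Proof. by rewrite /= muln1. Qed.

Lemma value_rcons w a : value (rcons w a) = value w + a * metal p (size w).
Proof. by rewrite -cats1 value_from_cat /= addn0. Qed.

Lemma value_nseq_cat k c s : value (nseq k c ++ s) = c * Mprev p k + value_from k s.
Proof.
rewrite value_from_cat size_nseq; congr (_ + _).
elim: k => [|k IHk]; first by rewrite /Mprev big_ord0 muln0.
by rewrite -addn1 nseqD value_from_cat IHk addn1 MprevS size_nseq /= mulnDr addn0.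
Qed.

Lemma value_dx_carry k s :
  (value (nseq k (p - 3) ++ p - 2 :: s)).+1 = Mprev p k.+2 + value_from k.+1 s.
Proof. by rewrite value_nseq_cat Mprev_carry /=; lia. Qed.

Fixpoint begins_dx (w : seq nat) : bool :=
  if w is a :: w' then (a == p - 2) || (a == p - 3) && begins_dx w' else false.

Lemma begins_dxP w :
  begins_dx w <-> exists2 j, j < size w &
    nth 0 w j = p - 2 /\ forall k, k < j -> nth 0 w k = p - 3.
Proof.
elim: w => [|a w IHw] /=; first by split=> // [[]].
split=> [/orP[/eqP ax | /andP[/eqP ad /IHw[j lt_j [xj dk]]]] | [[|j] lt_j [xj dk]]].
- by exists 0.
- by exists j.+1 => //; split=> // -[|k] //= /dk.
- by rewrite /= in xj; rewrite xj eqxx.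
- have /= -> := dk 0 isT; rewrite eqxx /=; apply/orP; right; apply/IHw.
  exists j => //.
  by split=> // k /(dk k.+1).
Qed.

Lemma no_forbidden_cons a w :
  no_forbidden p (a :: w) <-> no_forbidden p w /\ (a = p - 2 -> ~~ begins_dx w).
Proof.
split=> [nf | [nf ax] [|i] j].
- split=> [i j lt_ij xi dk | /= ax]; first by apply: (nf i.+1 j).
  apply/negP=> /begins_dxP[j lt_j [xj dk]].
  by apply: (nf 0 j) => //= -[|k] // /andP[_ le_kj]; apply: dk.
- rewrite add0n /= => lt_j /ax /negP dx dk xj; apply: dx; apply/begins_dxP.
  by exists j; [lia | split=> // k lt_kj; apply: (dk k.+1)].
- by rewrite !addSn; apply: nf.
Qed.

(* The forbidden factors [x d^j x] are palindromes. *)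
Lemma no_forbidden_rev w : no_forbidden p w -> no_forbidden p (rev w).
Proof.
rewrite /no_forbidden size_rev => nf i j lt_ij xi dk xij.
have nthR m : m < size w -> nth 0 w (size w - m.+1) = nth 0 (rev w) m.
  by move=> lt_m; rewrite nth_rev.
apply: (nf (size w - (i + j.+2)) j); first lia.
- by rewrite -xij -nthR; [congr nth; lia | lia].
- move=> k lt_kj; rewrite -(dk (j.+1 - k)); last lia.
  by rewrite -nthR; [congr nth; lia | lia].
- by rewrite -xi -nthR; [congr nth; lia | lia].
Qed.

Lemma no_forbidden_rcons w a :
  no_forbidden p (rcons w a) <-> no_forbidden p w /\ (a = p - 2 -> ~~ begins_dx (rev w)).
Proof.
have revE s : no_forbidden p (rev s) <-> no_forbidden p s.
  by split=> [/no_forbidden_rev|/no_forbidden_rev //]; rewrite revK.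
by rewrite -revE rev_rcons no_forbidden_cons revE.
Qed.

Definition nzm_word w := all (fun a => 1 <= a <= p - 2) w /\ no_forbidden p w.

Lemma is_nzm_codeE w N : is_nzm_code p w N <-> nzm_word w /\ N = value w.
Proof. by rewrite /is_nzm_code word_valueE; split=> [[? []] | [[]]]. Qed.

Lemma nzm_word_cons a w :
  nzm_word (a :: w) <->
  [/\ 1 <= a <= p - 2, nzm_word w & a = p - 2 -> ~~ begins_dx w].
Proof.
rewrite /nzm_word /= no_forbidden_cons.
by split=> [[/andP[? ?] [? ?]] | [-> [-> ?] ?]].
Qed.

Lemma nzm_word_rcons w a :
  nzm_word (rcons w a) <->
  [/\ 1 <= a <= p - 2, nzm_word w & a = p - 2 -> ~~ begins_dx (rev w)].
Proof.
rewrite /nzm_word all_rcons no_forbidden_rcons.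
by split=> [[/andP[? ?] [? ?]] | [-> [-> ?] ?]].
Qed.

Lemma nzm_word_catr s t : nzm_word (s ++ t) -> nzm_word t.
Proof. by elim: s => //= a s IHs /nzm_word_cons[_ /IHs]. Qed.

Lemma nzm_word_le_head e c v : nzm_word (e :: v) -> 1 <= c <= e -> nzm_word (c :: v).
Proof.
case/nzm_word_cons=> /andP[_ le_e] code_v ex /andP[c_ge1 le_ce].
by apply/nzm_word_cons; split=> // [|cx]; [apply/andP; lia | apply: ex; lia].
Qed.

Lemma nzm_word_dx k s :
  nzm_word s -> ~~ begins_dx s -> nzm_word (nseq k (p - 3) ++ p - 2 :: s).
Proof.
move=> code_s dx_s; elim: k => [|k IHk] /=; apply/nzm_word_cons.
  by split=> //; apply/andP; lia.
by split=> // [|dx]; [apply/andP | exfalso]; lia.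
Qed.

Lemma nzm_word_decr_head b r :
  b != 1 -> nzm_word (b :: r) -> nzm_word (b.-1 :: r) /\ ~~ begins_dx (b.-1 :: r).
Proof.
move=> /eqP b_ne1 /nzm_word_cons[/andP[b_gt0 le_b] code_r bx]; split.
  by apply/nzm_word_cons; split=> // [|?]; [apply/andP | exfalso]; lia.
apply/negP=> /orP[/eqP | /andP[/eqP bd]]; first lia.
by apply/negP/bx; lia.
Qed.

Lemma Mprev_le_value w : all (leq 1) w -> Mprev p (size w) <= value w.
Proof.
elim/last_ind: w => [|w a IHw]; first by rewrite /Mprev big_ord0.
rewrite all_rcons size_rcons value_rcons MprevS => /andP[a_ge1 /IHw le_w].
by have := leq_pmull (metal p (size w)) a_ge1; lia.
Qed.

Lemma value_lt_Mprev w :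
  nzm_word w ->
  value w < Mprev p (size w).+1 /\
  (~~ begins_dx (rev w) -> value w <= (p - 3) * Mprev p (size w)).
Proof.
elim/last_ind: w => [|w a IHw]; first by rewrite /= MprevS /Mprev big_ord0.
case/nzm_word_rcons=> /andP[a_ge1 a_le] /IHw[lt_w le_w] ax.
rewrite value_rcons size_rcons rev_rcons Mprev_carry MprevS /=.
rewrite MprevS in lt_w.
set P := Mprev p (size w) in lt_w le_w *; set M := metal p (size w) in lt_w *.
have P_le : P <= (p - 3) * P by rewrite leq_pmull; lia.
have [ax'|a_lt] := eqVneq a (p - 2).
  by have := le_w (ax ax'); split=> //; nia.
have [ad|a_ltd] := eqVneq a (p - 3) => /=.
  by split=> [|/le_w]; nia.
by split=> [|_]; nia.
Qed.

Lemma nzm_value_bounds w :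
  nzm_word w -> Mprev p (size w) <= value w < Mprev p (size w).+1.
Proof.
move=> code_w; rewrite (proj1 (value_lt_Mprev code_w)) andbT.
by apply: Mprev_le_value; apply: sub_all (proj1 code_w) => a /andP[].
Qed.

Lemma nzm_word_inj w1 w2 : nzm_word w1 -> nzm_word w2 -> value w1 = value w2 -> w1 = w2.
Proof.
move=> code1 code2 val12.
have : size w1 = size w2.
  by apply: (@Mprev_bracket_inj _ _ (value w1)); last rewrite val12; apply: nzm_value_bounds.
elim/last_ind: w1 w2 code1 code2 val12 => [|w1 a IHw] w2; first by case: w2.
case/lastP: w2 => [|w2 b]; first by move=> _ _ _; rewrite size_rcons.
move=> /nzm_word_rcons[_ code1 _] /nzm_word_rcons[_ code2 _].
rewrite !value_rcons !size_rcons => val12 [size12]; rewrite -size12 in val12.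
have := nzm_value_bounds code1; have := nzm_value_bounds code2.
rewrite -size12 MprevS => /andP[lo2 hi2] /andP[lo1 hi1].
have ab : a = b.
  by case: (ltngtP a b) => // /leq_mul/(_ (leqnn (metal p (size w1)))); rewrite mulSn; lia.
by rewrite ab (IHw w2) //; lia.
Qed.

Lemma ends1E w : nzm_word w -> ends1 p (value w) <-> nth 0 w 0 = 1.
Proof.
move=> code_w; split=> [[w' [/is_nzm_codeE[code_w' val_w'] <-]] | w0].
  by rewrite (nzm_word_inj code_w code_w' val_w').
by exists w; split=> //; apply/is_nzm_codeE.
Qed.

Lemma ends11E w :
  nzm_word w -> ends11 p (value w) <-> nth 0 w 0 = 1 /\ nth 0 w 1 = 1.
Proof.
move=> code_w; split=> [[w' [/is_nzm_codeE[code_w' val_w'] w'01]] | w01].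
  by rewrite (nzm_word_inj code_w code_w' val_w').
by exists w; split=> //; apply/is_nzm_codeE.
Qed.

Lemma ends1_last_before e v mu :
  nzm_word (e :: v) -> ends1 p mu -> mu <= value (e :: v) ->
  (forall k, mu < k <= value (e :: v) -> ~ ends1 p k) -> mu = value (1 :: v).
Proof.
move=> code_ev ends1_mu le_mu gap.
have code_c c : 1 <= c <= e -> nzm_word (c :: v) := nzm_word_le_head code_ev.
have e_ge1 : 1 <= e by case/nzm_word_cons: code_ev => /andP[].
rewrite !value_cons in le_mu gap *.
case: (ltngtP mu (1 + value_from 1 v)) => // [lt_mu | gt_mu].
  case: (gap (1 + value_from 1 v)); first lia.
  by rewrite -value_cons ends1E //; apply: code_c; lia.
have code_cv : nzm_word ((mu - value_from 1 v) :: v) by apply: code_c; lia.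
move: ends1_mu; rewrite [mu in ends1 _ mu](_ : _ = value (mu - value_from 1 v :: v)).
  by rewrite ends1E //=; lia.
by rewrite value_cons; lia.
Qed.

Lemma split_leading_ones (w : seq nat) :
  exists k t, w = nseq k 1 ++ t /\ head 0 t != 1.
Proof.
elim: w => [|a w [k [t [-> t0]]]]; first by exists 0, [::].
have [-> | a_ne1] := eqVneq a 1; first by exists k.+1, t.
by exists 0, (a :: nseq k 1 ++ t).
Qed.

Lemma pred_nzm_word_1b b r :
  b != 1 -> nzm_word (1 :: b :: r) ->
  nzm_word (p - 2 :: b.-1 :: r) /\ (value (p - 2 :: b.-1 :: r)).+1 = value (1 :: b :: r).
Proof.
move=> b_ne1 /nzm_word_cons[_ /(nzm_word_decr_head b_ne1)[code_v dx_v] _].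
split; first by apply/nzm_word_cons; split=> //; apply/andP; lia.
have : 0 < b.-1 by case/nzm_word_cons: code_v => /andP[].
by case: b {b_ne1 code_v dx_v} => // b _; rewrite /= /metal /= mulSn; lia.
Qed.

Lemma pred_nzm_word_ones_b k b r :
  b != 1 -> nzm_word (nseq k.+2 1 ++ b :: r) ->
  nzm_word (nseq k.+1 (p - 3) ++ p - 2 :: b.-1 :: r) /\
  (value (nseq k.+1 (p - 3) ++ p - 2 :: b.-1 :: r)).+1 = value (nseq k.+2 1 ++ b :: r).
Proof.
move=> b_ne1 /nzm_word_catr/(nzm_word_decr_head b_ne1)[code_v dx_v].
split; first exact: nzm_word_dx.
rewrite value_dx_carry value_nseq_cat MprevS /=.
have : 0 < b.-1 by case/nzm_word_cons: code_v => /andP[].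
by case: b {b_ne1 code_v dx_v} => // b _; rewrite /= mulSn; lia.
Qed.

Lemma pred_nzm_word_ones k :
  nzm_word (nseq k.+1 (p - 3) ++ [:: p - 2]) /\
  (value (nseq k.+1 (p - 3) ++ [:: p - 2])).+1 = value (nseq k.+3 1).
Proof.
split; first by apply: nzm_word_dx => //; split=> // i j.
by rewrite value_dx_carry -[nseq _ 1]cats0 value_nseq_cat /=; lia.
Qed.

Definition pred_last_digit w :=
  if (nth 0 w 1 == 1) && (w != [:: 1; 1]) then p - 3 else p - 2.

Lemma pred_nzm_word w :
  nzm_word w -> nth 0 w 0 = 1 -> 1 < size w ->
  exists2 v, nzm_word (pred_last_digit w :: v) &
             (value (pred_last_digit w :: v)).+1 = value w.
Proof.
move=> code_w w0 size_w; have [k [t [def_w t0]]] := split_leading_ones w.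
subst w; case: k t t0 code_w w0 size_w => [|[|[|k]]] [|b r] // t0 code_w w0 size_w.
- by rewrite /= in w0; rewrite /= w0 in t0.
- rewrite (_ : pred_last_digit _ = p - 2); last by rewrite /pred_last_digit /= (negbTE t0).
  by have [] := pred_nzm_word_1b t0 code_w; exists (b.-1 :: r).
- rewrite (_ : pred_last_digit _ = p - 2) //; exists [::].
    by apply/nzm_word_cons; split; [apply/andP; lia | split=> // i j | by []].
  by rewrite /= /metal /=; lia.
- by have [] := pred_nzm_word_ones_b t0 code_w; exists (p - 2 :: b.-1 :: r).
- by have [] := pred_nzm_word_ones k; rewrite cats0; exists (nseq k (p - 3) ++ [:: p - 2]).
- have [] := pred_nzm_word_ones_b t0 code_w.
  by exists (nseq k.+1 (p - 3) ++ p - 2 :: b.-1 :: r).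
Qed.

End Nzm.

Theorem lemma11 (p n mu nu : nat) :
  5 <= p ->
  Mprev p n < mu -> mu < nu -> nu <= Msum p n ->
  ends1 p mu -> ends1 p nu ->
  (forall k, mu < k < nu -> ~ ends1 p k) ->
  (nu - mu = p - 3 <-> ends11 p nu) /\ (~ ends11 p nu -> nu - mu = p - 2).
Proof.
move=> /ltnW p_ge4 lo_mu mu_nu nu_hi ends1_mu [w [/is_nzm_codeE[code_w def_nu] w0]] gap.
subst nu; have size_w : 1 < size w.
  by case: w w0 {code_w gap nu_hi} mu_nu => [|a [|b w]] //= ->; rewrite /metal /=; lia.
have [v code_v val_v] := pred_nzm_word p_ge4 code_w w0 size_w.
have mu_eq : mu = value_from p 0 (1 :: v).
  apply: (ends1_last_before p_ge4 code_v ends1_mu) => [|k /andP[lt_k le_k]]; first lia.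
  by apply: (gap k); rewrite lt_k /=; lia.
have w_ne11 : w != [:: 1; 1].
  apply/eqP=> w11; move: val_v mu_eq nu_hi.
  rewrite w11 /pred_last_digit !value_cons /= /metal /= => val_v mu_eq.
  by rewrite Msum_eq1; lia.
have -> : value_from p 0 w - mu = pred_last_digit p w.
  by move: val_v; rewrite mu_eq !value_cons; lia.
rewrite ends11E // w0 /pred_last_digit w_ne11 andbT.
have x_ne_d : p - 2 <> p - 3 by lia.
by case: eqP => w1; split; intuition.
Qed.
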